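(* Let $L$ be a simple Lie algebra over a field $k$ with $|k|>2$, generated by its pure extremal elements, such that there exists a Galois extension $k'/k$ of degree at most $2$ for which the extremal geometry of $L\otimes_k k'$ contains lines, and such that there exist symplectic pairs of extremal elements in $L$. Then $L_{k'}:=L\otimes_k k'$ is simple.
   Context: A nonzero $a$ in a Lie algebra $M$ over $F$ is extremal if there is $g_a\colon M\to F$ with $[a,[a,u]]=2g_a(u)a$, $[[a,u],[a,w]]=g_a([u,w])a+g_a(w)[a,u]-g_a(u)[a,w]$, $[a,[u,[a,w]]]=g_a([u,w])a-g_a(w)[a,u]-g_a(u)[a,w]$ for all $u,w$; sandwiches satisfy $[a,[a,u]]=0=[a,[u,[a,w]]]$; pure = non-sandwich. Pure extremal $a,b$ with $Fa\ne Fb$ are collinear if $[a,b]=0$ and $\lambda a+\mu b$ is extremal or $0$ for all $\lambda,\mu$, and symplectic if $[a,b]=0$ and $\lambda a+\mu b$ is extremal or $0$ only when $\lambda\mu=0$. The extremal geometry (points: $Fa$, $a$ extremal; lines: spans of collinear pairs) contains lines iff a collinear pair exists. *)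

From HB Require Import structures.
From mathcomp Require Import all_boot all_order all_algebra all_field.
Set Implicit Arguments. Unset Strict Implicit. Unset Printing Implicit Defensive.
Import GRing.Theory.
Local Open Scope ring_scope.

Section LieNotions.
Variables (F : fieldType) (V : zmodType) (sc : F -> V -> V) (br : V -> V -> V).

Definition is_lie : Prop :=
  [/\ forall (c : F) x y z, br (sc c x + y) z = sc c (br x z) + br y z,
      forall (c : F) x y z, br z (sc c x + y) = sc c (br z x) + br z y,
      forall x, br x x = 0 &
      forall x y z, br x (br y z) + br y (br z x) + br z (br x y) = 0].

Definition extremal (a : V) : Prop :=
  a != 0 /\ exists g : V -> F, forall u w,
    [/\ br a (br a u) = sc (g u *+ 2) a,
        br (br a u) (br a w) = sc (g (br u w)) a + sc (g w) (br a u) - sc (g u) (br a w) &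
        br a (br u (br a w)) = sc (g (br u w)) a - sc (g w) (br a u) - sc (g u) (br a w)].

Definition sandwich (a : V) : Prop :=
  extremal a /\ forall u w, br a (br a u) = 0 /\ br a (br u (br a w)) = 0.

Definition pure (a : V) : Prop := extremal a /\ ~ sandwich a.

Definition distinct_points (a b : V) : Prop := ~ exists c : F, b = sc c a.

Definition collinear (a b : V) : Prop :=
  [/\ pure a, pure b, distinct_points a b, br a b = 0 &
      forall l m : F, extremal (sc l a + sc m b) \/ sc l a + sc m b = 0].

Definition symplectic (a b : V) : Prop :=
  [/\ pure a, pure b, distinct_points a b, br a b = 0 &
      forall l m : F, extremal (sc l a + sc m b) \/ sc l a + sc m b = 0 ->
                      l * m = 0].

(* The extremal geometry contains a line, i.e. the span of a collinear pair. *)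
Definition geometry_has_lines : Prop := exists a b, collinear a b.

Definition lie_subalgebra (S : V -> Prop) : Prop :=
  [/\ S 0, forall x y, S x -> S y -> S (x + y),
      forall (c : F) x, S x -> S (sc c x) & forall x y, S x -> S y -> S (br x y)].

Definition generated_by_pure_extremal : Prop :=
  forall S, lie_subalgebra S -> (forall x, pure x -> S x) -> forall x, S x.

Definition lie_ideal (I : V -> Prop) : Prop :=
  [/\ I 0, forall x y, I x -> I y -> I (x + y),
      forall (c : F) x, I x -> I (sc c x) & forall x y, I y -> I (br x y)].

Definition lie_simple : Prop :=
  (exists x y, br x y != 0) /\
  forall I, lie_ideal I -> (forall x, I x -> x = 0) \/ (forall x, I x).

End LieNotions.

(* Base change L (x)_k k' for a finite field extension k'/k, realized in
   coordinates w.r.t. the k-basis b = vbasis {:k'}: an element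
   sum_i v_i (x) b_i is stored as the finite function i |-> v_i. *)
Section BaseChange.
Variables (k : fieldType) (L : lmodType k) (k' : fieldExtType k).

Definition bc_basis := vbasis {:k'}.

Definition bcT := {ffun 'I_(\dim {:k'}) -> L}.

(* c . (sum_j v_j (x) b_j) = sum_i (sum_j coord_i(c b_j) v_j) (x) b_i *)
Definition bc_scale (c : k') (v : bcT) : bcT :=
  [ffun i => \sum_(j < \dim {:k'}) coord bc_basis i (c * tnth bc_basis j) *: v j].

(* [sum_j v_j (x) b_j, sum_l w_l (x) b_l] = sum_{j,l} [v_j,w_l] (x) b_j b_l *)
Definition bc_bracket (br : L -> L -> L) (v w : bcT) : bcT :=
  [ffun i => \sum_(j < \dim {:k'}) \sum_(l < \dim {:k'})
    coord bc_basis i (tnth bc_basis j * tnth bc_basis l) *: br (v j) (w l)].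

End BaseChange.

From HB Require Import structures.
From mathcomp Require Import all_boot all_order all_algebra all_field.
From Stdlib Require Import Classical IndefiniteDescription.
Import GRing.Theory.
Set Implicit Arguments. Unset Strict Implicit. Unset Printing Implicit Defensive.
Local Open Scope ring_scope.

(* An ideal I of L (x) k' meets L (x) 1 in an ideal of L.  If that ideal is L,
   then I is everything.  Otherwise it is 0; when k' = k + k e has degree 2,
   the pairs (y, x) with x (x) 1 + y (x) e in I then form the graph of a map
   defined on an ideal of L.  Were that domain all of L, the map would lie in
   the centroid of L; a pure extremal element forces every centroidal map to
   have an eigenvector w, T w = lam w, so w (x) (lam + e) and hence w (x) 1
   would lie in I, which is impossible.  So the domain is 0 and I = 0.  Only
   the simplicity of L, the existence of a pure extremal element and
   [k' : k] <= 2 are needed. *)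

Section LieAlgebra.
Variables (k : fieldType) (L : lmodType k) (br : L -> L -> L).
Hypothesis lieL : is_lie *:%R br.

Lemma brxx x : br x x = 0.
Proof. by case: lieL. Qed.

Lemma br0l z : br 0 z = 0.
Proof.
case: lieL => brDZl _ _ _; have := brDZl 1 0 0 z.
by rewrite !scale1r addr0 => /esym; rewrite -[RHS]addr0 => /addrI.
Qed.

Lemma br0r z : br z 0 = 0.
Proof.
case: lieL => _ brDZr _ _; have := brDZr 1 0 0 z.
by rewrite !scale1r addr0 => /esym; rewrite -[RHS]addr0 => /addrI.
Qed.

Lemma brDr x y z : br z (x + y) = br z x + br z y.
Proof. by case: lieL => _ brDZr _ _; have := brDZr 1 x y z; rewrite !scale1r. Qed.

Lemma brZl c x z : br (c *: x) z = c *: br x z.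
Proof. by case: lieL => brDZl _ _ _; rewrite -[c *: x]addr0 brDZl br0l addr0. Qed.

Lemma brZr c x z : br z (c *: x) = c *: br z x.
Proof. by case: lieL => _ brDZr _ _; rewrite -[c *: x]addr0 brDZr br0r addr0. Qed.

Definition extremal_form (a : L) (g : L -> k) : Prop :=
  forall u w,
    [/\ br a (br a u) = (g u *+ 2) *: a,
        br (br a u) (br a w) = g (br u w) *: a + g w *: br a u - g u *: br a w &
        br a (br u (br a w)) = g (br u w) *: a - g w *: br a u - g u *: br a w].

Definition centroidal (T : L -> L) : Prop :=
  (forall c x, T (c *: x) = c *: T x) /\ (forall x y, br x (T y) = T (br x y)).

Section ExtremalForm.
Variables (a : L) (g : L -> k).
Hypotheses (a_neq0 : a != 0) (form_a : extremal_form a g).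

Lemma extremal_form0 : g 0 = 0.
Proof.
have [_ + _] := form_a 0 0; rewrite !br0r !scaler0 subr0 addr0.
by move/esym/eqP; rewrite scaler_eq0 (negPf a_neq0) orbF => /eqP.
Qed.

Lemma pure_form_neq0 : ~ sandwich *:%R br a -> exists u, g u != 0.
Proof.
move=> not_sw; apply: NNPP => g_eq0; apply: not_sw; split; first by split=> //; exists g.
have {}g_eq0 u : g u = 0 by apply/eqP; apply: contra_notT g_eq0; exists u.
by move=> u w; have [-> _ ->] := form_a u w; rewrite !g_eq0 mul0rn !scale0r !subr0.
Qed.

Lemma extremal_form_centralized u :
  br a u = 0 -> g u != 0 -> forall w, br a w = (g (br u w) / g u) *: a.
Proof.
move=> au0 gu_neq0 w; have [_ + _] := form_a u w.
rewrite au0 br0l scaler0 addr0 => /eqP; rewrite eq_sym subr_eq0 => /eqP gaw.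
by rewrite mulrC -scalerA gaw scalerA mulVf // scale1r.
Qed.

End ExtremalForm.

Lemma pure_ad_neq0 a : pure *:%R br a -> exists w, br a w != 0.
Proof.
case=> ext_a not_sw; apply: NNPP => ad_eq0; apply: not_sw; split=> //.
have {}ad_eq0 w : br a w = 0 by apply/eqP; apply: contra_notT ad_eq0; exists w.
by move=> u w; rewrite !ad_eq0.
Qed.

(* For [u] with [g u != 0], [[a, u]] is an eigenvector if it is nonzero;
   otherwise [ad a] maps into [k a], and [a] itself is one. *)
Lemma centroidal_eigenvector T a :
  centroidal T -> pure *:%R br a -> exists v lam, v != 0 /\ T v = lam *: v.
Proof.
move=> [TZ TR] pure_a; have [[a_neq0 [g form_a]] _] := pure_a.
have T0 : T 0 = 0 by rewrite -(scale0r (0 : L)) TZ !scale0r.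
have [u gu_neq0] := pure_form_neq0 a_neq0 form_a pure_a.2.
have [au0|au_neq0] := eqVneq (br a u) 0; last first.
  exists (br a u), (g (T u) / g u); split=> //.
  have [_ + _] := form_a u (T u).
  rewrite !TR !brxx T0 (extremal_form0 a_neq0 form_a) scale0r add0r.
  move/eqP; rewrite eq_sym subr_eq0 => /eqP gTau.
  by rewrite mulrC -scalerA gTau scalerA mulVf // scale1r.
have ad_a := extremal_form_centralized form_a au0 gu_neq0.
have [w aw_neq0] := pure_ad_neq0 pure_a.
have cw_neq0 : g (br u w) / g u != 0.
  by apply: contra aw_neq0 => /eqP c0; rewrite ad_a c0 scale0r.
exists a, ((g (br u (T w)) / g u) / (g (br u w) / g u)); split=> //.
have := ad_a (T w); rewrite TR ad_a TZ => cTa.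
by rewrite mulrC -scalerA -cTa scalerA mulVf // scale1r.
Qed.

End LieAlgebra.

Section BaseChange.
Variables (k : fieldType) (L : lmodType k) (br : L -> L -> L) (k' : fieldExtType k).
Hypothesis lieL : is_lie *:%R br.

Local Notation n := (\dim {:k'}).
Local Notation V := (bcT L k').
Local Notation bcbr := (bc_bracket br).
Local Notation b := (@bc_basis k k').

Definition tensor (x : L) (g : k') : V := [ffun i => coord b i g *: x].

Lemma tensor0l g : tensor 0 g = 0.
Proof. by apply/ffunP => i; rewrite !ffunE scaler0. Qed.

Lemma tensorDl x y g : tensor (x + y) g = tensor x g + tensor y g.
Proof. by apply/ffunP => i; rewrite !ffunE scalerDr. Qed.

Lemma tensorBl x y g : tensor (x - y) g = tensor x g - tensor y g.
Proof. by apply/ffunP => i; rewrite !ffunE scalerBr. Qed.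

Lemma tensorDr x g h : tensor x (g + h) = tensor x g + tensor x h.
Proof. by apply/ffunP => i; rewrite !ffunE linearD scalerDl. Qed.

Lemma tensorZ c x g : tensor (c *: x) g = tensor x (c *: g).
Proof. by apply/ffunP => i; rewrite !ffunE scalerA linearZ mulrC. Qed.

Lemma bc_basis_free : free b.
Proof. exact: basis_free (vbasisP _). Qed.

Lemma bc_basis_expand g : g = \sum_(j < n) coord b j g *: b`_j.
Proof. exact: coord_vbasis (memvf g). Qed.

Lemma bc_decomp (v : V) : v = \sum_(j < n) tensor (v j) b`_j.
Proof.
apply/ffunP => i; rewrite sum_ffunE (bigD1 i) //= big1 ?addr0.
  by rewrite ffunE coord_free ?bc_basis_free // eqxx scale1r.
by move=> j /negPf ji; rewrite ffunE coord_free ?bc_basis_free // ji scale0r.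
Qed.

Lemma tensor_eq0 x g : g != 0 -> tensor x g = 0 -> x = 0.
Proof.
move=> g_neq0 xg0; apply: contraTeq g_neq0 => x_neq0; rewrite negbK; apply/eqP.
rewrite (bc_basis_expand g) big1 // => j _.
have /eqP := congr1 (fun f : V => f j) xg0; rewrite !ffunE.
by rewrite scaler_eq0 (negPf x_neq0) orbF => /eqP ->; rewrite scale0r.
Qed.

Lemma bc_scale_tensor c x g : bc_scale c (tensor x g) = tensor x (c * g).
Proof.
apply/ffunP => i; rewrite !ffunE {2}(bc_basis_expand g) mulr_sumr linear_sum.
rewrite scaler_suml; apply: eq_bigr => j _.
by rewrite ffunE (tnth_nth 0) scalerA -scalerAr linearZ mulrC.
Qed.

Lemma bc_scaleD c (v w : V) : bc_scale c (v + w) = bc_scale c v + bc_scale c w.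
Proof.
apply/ffunP => i; rewrite !ffunE -big_split; apply: eq_bigr => j _.
by rewrite ffunE scalerDr.
Qed.

Lemma bc_scaleN1 (v : V) : bc_scale (-1) v = - v.
Proof.
apply/ffunP => i; rewrite !ffunE (bigD1 i) //= big1 ?addr0 => [|j /negPf ji];
  rewrite (tnth_nth 0) mulN1r linearN /= coord_free ?bc_basis_free //.
  by rewrite eqxx scaleN1r.
by rewrite ji oppr0 scale0r.
Qed.

Lemma bc_bracketDr (u v w : V) : bcbr u (v + w) = bcbr u v + bcbr u w.
Proof.
apply/ffunP => i; rewrite !ffunE -big_split; apply: eq_bigr => j _.
rewrite -big_split; apply: eq_bigr => l _.
by rewrite ffunE (brDr lieL) scalerDr.
Qed.

Lemma bc_bracket_tensor x y g h :
  bcbr (tensor x g) (tensor y h) = tensor (br x y) (g * h).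
Proof.
apply/ffunP => i; rewrite !ffunE {2}(bc_basis_expand g) {2}(bc_basis_expand h).
rewrite mulr_suml linear_sum scaler_suml; apply: eq_bigr => j _.
rewrite mulr_sumr linear_sum scaler_suml; apply: eq_bigr => l _.
rewrite !ffunE (brZl lieL) (brZr lieL) !scalerA !(tnth_nth 0).
by rewrite -scalerAl -scalerAr !linearZ /= mulrC mulrA.
Qed.

Lemma dim1_span : (n <= 1)%N -> forall g : k', exists c : k, g = c%:A.
Proof.
move=> n_le1 g; have : (1%VS == fullv :> {vspace k'}) by rewrite eqEdim subvf dimv1.
by move/eqP=> full1; have := memvf g; rewrite -full1 => /vlineP.
Qed.

Lemma dim2_span e : n = 2 -> e \notin 1%VS ->
  forall g : k', exists c d : k, g = c%:A + d *: e.
Proof.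
move=> n2 e_notin1 g.
have : (1 + <[e]> == fullv :> {vspace k'})%VS.
  have := dimv_leqif_sup (addvSl 1%VS <[e]>); rewrite dimv1 => /ltn_leqif lt1.
  rewrite eqEdim subvf n2 lt1.
  apply: contra e_notin1 => /subvP; apply; apply: (subvP (addvSr _ _)).
  exact: memv_line.
move/eqP=> full_e; have := memvf g; rewrite -full_e => /memv_addP[_ /vlineP[c ->]].
by case=> _ /vlineP[d ->] ->; exists c, d.
Qed.

Lemma tensor_split e : (forall g : k', exists c d : k, g = c%:A + d *: e) ->
  forall v : V, exists x y, v = tensor x 1 + tensor y e.
Proof.
move=> span_e v; rewrite (bc_decomp v).
apply: (big_ind (fun v => exists x y, v = tensor x 1 + tensor y e)).
- by exists 0, 0; rewrite !tensor0l addr0.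
- move=> _ _ [x1 [y1 ->]] [x2 [y2 ->]]; exists (x1 + x2), (y1 + y2).
  by rewrite !tensorDl addrACA.
- move=> j _; have [c [d ->]] := span_e b`_j.
  by exists (c *: v j), (d *: v j); rewrite !tensorZ tensorDr.
Qed.

Section Ideal.
Variable I : V -> Prop.
Hypothesis idealI : lie_ideal (@bc_scale k L k') bcbr I.

Lemma bc_idealB u v : I u -> I v -> I (u - v).
Proof. by case: idealI => _ ID IZ _ Iu Iv; rewrite -bc_scaleN1; apply: ID => //; apply: IZ. Qed.

Lemma bc_ideal_sum (F : 'I_n -> V) : (forall j, I (F j)) -> I (\sum_j F j).
Proof. by case: idealI => I0 ID _ _ IF; apply: big_ind. Qed.

Lemma bc_ideal_tensorMl x g h : I (tensor x g) -> I (tensor x (h * g)).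
Proof. by case: idealI => _ _ IZ _ Ixg; rewrite -bc_scale_tensor; apply: IZ. Qed.

Lemma bc_ideal_tensor1 x g : g != 0 -> I (tensor x g) -> I (tensor x 1).
Proof. by move=> g_neq0 /(bc_ideal_tensorMl g^-1); rewrite mulVf. Qed.

Lemma bc_ideal_restrict : lie_ideal *:%R br (fun z => I (tensor z 1)).
Proof.
case: idealI => I0 ID _ IB; split.
- by rewrite tensor0l.
- by move=> x y Ix Iy; rewrite tensorDl; apply: ID.
- by move=> c x Ix; rewrite tensorZ -mulr_algl; apply: bc_ideal_tensorMl.
- by move=> x y Iy; have := IB (tensor x 1) _ Iy; rewrite bc_bracket_tensor mulr1.
Qed.

Lemma bc_ideal_full : (forall z, I (tensor z 1)) -> forall v, I v.
Proof.
move=> I1 v; rewrite (bc_decomp v); apply: bc_ideal_sum => j.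
by rewrite -[b`_j]mulr1; apply: bc_ideal_tensorMl.
Qed.

End Ideal.

Section IdealGraph.
Variables (I : V -> Prop) (e : k').
Hypotheses (idealI : lie_ideal (@bc_scale k L k') bcbr I)
  (I1_eq0 : forall z, I (tensor z 1) -> z = 0) (e_notin1 : e \notin 1%VS).

Definition ideal_graph (y x : L) : Prop := I (tensor x 1 + tensor y e).

Lemma ideal_graph_functional y x1 x2 :
  ideal_graph y x1 -> ideal_graph y x2 -> x1 = x2.
Proof.
move=> Ix1 Ix2; apply/eqP; rewrite -subr_eq0; apply/eqP/I1_eq0.
by have := bc_idealB idealI Ix1 Ix2; rewrite opprD addrACA subrr addr0 -tensorBl.
Qed.

Lemma ideal_graphZ c y x : ideal_graph y x -> ideal_graph (c *: y) (c *: x).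
Proof.
case: idealI => _ _ IZ _ /(IZ c%:A).
by rewrite bc_scaleD !bc_scale_tensor !mulr_algl /ideal_graph !tensorZ.
Qed.

Lemma ideal_graph_bracket z y x :
  ideal_graph y x -> ideal_graph (br z y) (br z x).
Proof.
case: idealI => _ _ _ /(_ (tensor z 1)) IB /IB.
by rewrite bc_bracketDr !bc_bracket_tensor !mul1r.
Qed.

Lemma ideal_graph_domain : lie_ideal *:%R br (fun y => exists x, ideal_graph y x).
Proof.
case: idealI => I0 ID _ _; split.
- by exists 0; rewrite /ideal_graph !tensor0l addr0.
- move=> y1 y2 [x1 Ix1] [x2 Ix2]; exists (x1 + x2).
  by have := ID _ _ Ix1 Ix2; rewrite /ideal_graph !tensorDl addrACA.
- by move=> c y [x Ixy]; exists (c *: x); apply: ideal_graphZ.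
- by move=> z y [x Ixy]; exists (br z x); apply: ideal_graph_bracket.
Qed.

Lemma ideal_graph_eigen w lam : ideal_graph w (lam *: w) -> w = 0.
Proof.
have lam_e_neq0 : lam%:A + e != 0.
  apply: contra e_notin1; rewrite addrC addr_eq0 => /eqP ->.
  by rewrite memvN memvZ ?memv_line.
rewrite /ideal_graph tensorZ -tensorDr.
by move/(bc_ideal_tensor1 idealI lam_e_neq0); apply: I1_eq0.
Qed.

(* If the graph had full domain, it would be the graph of a centroidal map,
   whose eigenvectors are excluded by [ideal_graph_eigen]. *)
Lemma ideal_graph_domain0 : lie_simple *:%R br -> (exists a, pure *:%R br a) ->
  forall y x, ideal_graph y x -> y = 0.
Proof.
move=> [_ simpleL] [a pure_a].
have [dom0 y x Ixy|dom_full] := simpleL _ ideal_graph_domain; first by apply: dom0; exists x.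
have [T graphT] := functional_choice _ dom_full.
have centT : centroidal br T.
  split=> [c x|x y]; apply: ideal_graph_functional => //.
  - exact: ideal_graphZ.
  - exact: ideal_graph_bracket.
have [w [lam [w_neq0 Tw]]] := centroidal_eigenvector lieL centT pure_a.
by move: w_neq0 (graphT w); rewrite Tw => /eqP w_neq0 /ideal_graph_eigen.
Qed.

End IdealGraph.

Lemma bc_ideal_eq0_dim_le1 I : lie_ideal (@bc_scale k L k') bcbr I ->
  (forall z, I (tensor z 1) -> z = 0) -> (n <= 1)%N -> forall v, I v -> v = 0.
Proof.
move=> idealI I1_eq0 n_le1 v.
have span1 (g : k') : exists c d : k, g = c%:A + d *: 1.
  by have [c ->] := dim1_span n_le1 g; exists c, 0; rewrite scale0r addr0.
have [x [y ->]] := tensor_split span1 v.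
by rewrite -tensorDl => /I1_eq0 ->; rewrite tensor0l.
Qed.

Lemma bc_ideal_eq0_dim2 I : lie_ideal (@bc_scale k L k') bcbr I ->
  (forall z, I (tensor z 1) -> z = 0) -> lie_simple *:%R br ->
  (exists a, pure *:%R br a) -> n = 2 -> forall v, I v -> v = 0.
Proof.
move=> idealI I1_eq0 simpleL pureL n2 v.
have [e _ e_notin1] : exists2 e : k', e \in fullv & e \notin 1%VS.
  by apply/subvPn/negP => /dimvS; rewrite dimv1 n2.
have [x [y ->]] := tensor_split (dim2_span n2 e_notin1) v.
move=> Iv; have y0 := ideal_graph_domain0 idealI I1_eq0 e_notin1 simpleL pureL Iv.
by move: Iv; rewrite y0 tensor0l addr0 => /I1_eq0 ->; rewrite tensor0l.
Qed.

Lemma lie_simple_bc : lie_simple *:%R br -> (exists a, pure *:%R br a) ->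
  (n <= 2)%N -> lie_simple (@bc_scale k L k') bcbr.
Proof.
move=> simpleL pureL n_le2; have [[x [y xy_neq0]] simple_ideal] := simpleL.
split.
  exists (tensor x 1), (tensor y 1); rewrite bc_bracket_tensor mulr1.
  by apply: contra xy_neq0 => /eqP /(tensor_eq0 (oner_neq0 _)) ->.
move=> I idealI.
have [I1_eq0|I1_full] := simple_ideal _ (bc_ideal_restrict idealI); last first.
  by right; apply: bc_ideal_full.
left; move: n_le2; rewrite leq_eqVlt ltnS => /orP[/eqP n2|n_le1].
- exact: bc_ideal_eq0_dim2.
- exact: bc_ideal_eq0_dim_le1.
Qed.

End BaseChange.

Theorem lemma5p2 (k : fieldType) (L : lmodType k) (br : L -> L -> L)
  (k' : splittingFieldType k) :
  is_lie *:%R br ->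
  (exists c : k, c != 0 /\ c != 1) ->
  lie_simple *:%R br ->
  generated_by_pure_extremal *:%R br ->
  galois 1%VS {:k'} ->
  (\dim {:k'} <= 2)%N ->
  geometry_has_lines (@bc_scale k L k') (bc_bracket br) ->
  (exists a b : L, symplectic *:%R br a b) ->
  lie_simple (@bc_scale k L k') (bc_bracket br).
Proof.
move=> lieL _ simpleL _ _ dim_le2 _ [a [_ [pure_a _ _ _ _]]].
by apply: lie_simple_bc => //; exists a.
Qed.
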